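(* Let $f\colon\mathbb{R}^d\to\mathbb{R}\cup\{+\infty\}$ be $\rho$-weakly convex and let $\{f_x\}_{x\in\mathbb{R}^d}$ be a two-sided model family with constant $q$. Fix $a\in(0,1)$, $\mu$ with $\mu^{-1}>\rho+q$, $\theta>q$, $x_0\in\mathbb{R}^d$, and define $$x_{k+1}=\operatorname{argmin}_{x\in\mathbb{R}^d}\Big\{f_{x_k}(x)+\frac{1+\theta\mu}{2\mu}\Big\|x-\frac{x_0+\theta\mu x_k}{1+\theta\mu}\Big\|^2\Big\},\quad k\ge0.$$ If $K\ge2\log(a^{-1})\big/\log\big(\frac{\mu^{-1}-\rho+\theta}{q+\theta}\big)$, then $\|x_K-\mathrm{prox}_{\mu f}(x_0)\|\le a\|x_0-\mathrm{prox}_{\mu f}(x_0)\|$.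
   Context: Two-sided model family: for each $x\in\mathbb{R}^d$, $f_x\colon\mathbb{R}^d\to\mathbb{R}\cup\{+\infty\}$ is closed and $\rho$-weakly convex (i.e. $f_x+\frac\rho2\|\cdot\|^2$ is convex) and satisfies $|f_x(y)-f(y)|\le\frac q2\|y-x\|^2$ for all $y\in\mathbb{R}^d$. $\mathrm{prox}_{\mu f}(x)=\operatorname{argmin}_y\{f(y)+\frac1{2\mu}\|y-x\|^2\}$. *)

From HB Require Import structures.
From mathcomp Require Import all_boot all_order all_algebra.
From mathcomp Require Import all_classical all_reals all_analysis.
Set Implicit Arguments. Unset Strict Implicit. Unset Printing Implicit Defensive.
Import Order.TTheory GRing.Theory Num.Theory.
Import numFieldNormedType.Exports.
Local Open Scope classical_set_scope.
Local Open Scope ring_scope.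

Definition edot {R : realType} {d : nat} (u v : 'rV[R]_d) : R :=
  \sum_(i < d) u ord0 i * v ord0 i.
Definition enorm {R : realType} {d : nat} (u : 'rV[R]_d) : R :=
  Num.sqrt (edot u u).

(* g takes values in R \cup {+oo} *)
Definition no_minus_infty {R : realType} {d : nat} (g : 'rV[R]_d -> \bar R) :=
  forall y, g y != -oo%E.

Definition proper_fun {R : realType} {d : nat} (g : 'rV[R]_d -> \bar R) :=
  exists y, (g y < +oo)%E.

(* closed = lower semicontinuous: all sublevel sets are closed *)
Definition closed_fun {R : realType} {d : nat} (g : 'rV[R]_d -> \bar R) :=
  forall t : R, closed [set y | (g y <= t%:E)%E].

Definition convex_efun {R : realType} {d : nat} (g : 'rV[R]_d -> \bar R) :=
  forall (x y : 'rV[R]_d) (t : R), 0 <= t -> t <= 1 ->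
    (g (t *: x + (1 - t) *: y)%R <= t%:E * g x + (1 - t)%:E * g y)%E.

Definition weakly_convex {R : realType} {d : nat} (rho : R) (g : 'rV[R]_d -> \bar R) :=
  convex_efun (fun y => (g y + (rho / 2 * enorm y ^+ 2)%:E)%E).

Definition is_argmin {R : realType} {d : nat} (phi : 'rV[R]_d -> \bar R) (z : 'rV[R]_d) :=
  forall y, (phi z <= phi y)%E.

Definition is_prox {R : realType} {d : nat} (mu : R) (f : 'rV[R]_d -> \bar R) (x p : 'rV[R]_d) :=
  is_argmin (fun y => (f y + (1 / (2 * mu) * enorm (y - x) ^+ 2)%:E)%E) p.

Definition two_sided_model {R : realType} {d : nat} (rho q : R)
  (f : 'rV[R]_d -> \bar R) (fm : 'rV[R]_d -> 'rV[R]_d -> \bar R) :=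
  forall x, [/\ closed_fun (fm x), no_minus_infty (fm x), weakly_convex rho (fm x) &
    forall y, (fm x y <= f y + (q / 2 * enorm (y - x) ^+ 2)%:E)%E /\
              (f y <= fm x y + (q / 2 * enorm (y - x) ^+ 2)%:E)%E].

From HB Require Import structures.
From mathcomp Require Import all_boot all_order all_algebra.
From mathcomp Require Import all_classical all_reals all_analysis.
From mathcomp Require Import ring lra.
Import Order.TTheory GRing.Theory Num.Theory.
Local Open Scope ring_scope.

(* Write p = prox_{mu f}(x0), D_k = ||x_k - p||^2 and
   r = (q + theta) / (mu^-1 - rho + theta) < 1.
   1. Three-point inequality: if g is rho-weakly convex and m minimizes
      g + c||. - z||^2 with c >= rho/2, then for every y with g y finite
        g m + c||m - z||^2 + (c - rho/2)||y - m||^2 <= g y + c||y - z||^2.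
      It follows from weak convexity along the segment [m, y] and a limit
      t -> 0 of the resulting inequality.
   2. The recentred quadratic defining x_{k+1} differs from
      ||. - x0||^2/(2 mu) + theta/2 ||. - x_k||^2 by a constant only.
   3. Applying 1 to the model (at y = p) and to f (at y = x_{k+1}), and
      chaining with the two-sided model bounds, gives D_{k+1} <= r D_k.
   4. Hence D_K <= r^K D_0, and the lower bound on K gives r^K <= a^2. *)

Section EuclideanNorm.
Context {R : realType} {d : nat}.
Implicit Types (u v : 'rV[R]_d).

Lemma edot_ge0 u : 0 <= edot u u.
Proof. by apply: sumr_ge0 => i _; rewrite -expr2 sqr_ge0. Qed.

Lemma enorm2 u : enorm u ^+ 2 = edot u u.
Proof. by rewrite /enorm sqr_sqrtr // edot_ge0. Qed.

Lemma enorm_ge0 u : 0 <= enorm u.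
Proof. exact: sqrtr_ge0. Qed.

Lemma enormB_sym u v : enorm (u - v) = enorm (v - u).
Proof.
rewrite /enorm /edot; congr Num.sqrt; apply: eq_bigr => i _.
by rewrite !mxE; ring.
Qed.

(* Squared norm of a convex combination; the defect term is what turns
   (weak) convexity into strong convexity of the proximal objective. *)
Lemma enorm_comb (t : R) u v :
  enorm (t *: u + (1 - t) *: v) ^+ 2 =
  t * enorm u ^+ 2 + (1 - t) * enorm v ^+ 2 - t * (1 - t) * enorm (u - v) ^+ 2.
Proof.
rewrite !enorm2 /edot !mulr_sumr -big_split -sumrB /=.
by apply: eq_bigr => i _; rewrite !mxE; ring.
Qed.

(* Completing the square: the quadratic centred at (x0 + theta mu xk)/(1 + theta mu)
   equals ||. - x0||^2/(2 mu) + theta/2 ||. - xk||^2 up to an additive constant. *)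
Lemma recentred_quadratic (mu theta : R) (x0 xk y1 y2 : 'rV[R]_d) :
  0 < mu -> 0 <= theta ->
  (1 + theta * mu) / (2 * mu) *
    enorm (y1 - (1 + theta * mu)^-1 *: (x0 + (theta * mu) *: xk)) ^+ 2 -
  (1 + theta * mu) / (2 * mu) *
    enorm (y2 - (1 + theta * mu)^-1 *: (x0 + (theta * mu) *: xk)) ^+ 2 =
  (1 / (2 * mu) * enorm (y1 - x0) ^+ 2 + theta / 2 * enorm (y1 - xk) ^+ 2) -
  (1 / (2 * mu) * enorm (y2 - x0) ^+ 2 + theta / 2 * enorm (y2 - xk) ^+ 2).
Proof.
move=> mu_gt0 theta_ge0.
have tm_neq0 : 1 + theta * mu != 0 by rewrite gt_eqF //; nra.
have mu_neq0 : mu != 0 by rewrite gt_eqF.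
rewrite !enorm2 /edot !mulr_sumr -!big_split /= -!sumrB.
by apply: eq_bigr => i _; rewrite !mxE; field; rewrite tm_neq0 mu_neq0.
Qed.

End EuclideanNorm.

Section FineBounds.
Context {R : realType}.

Lemma fine_le {e : \bar R} {s : R} :
  e != -oo%E -> (e <= s%:E)%E -> e \is a fin_num /\ fine e <= s.
Proof. by case: e => [x| |] //= _; rewrite lee_fin. Qed.

Lemma fine_addr_le {e : \bar R} {r s : R} :
  e != -oo%E -> (e + r%:E <= s%:E)%E -> e \is a fin_num /\ fine e + r <= s.
Proof. by case: e => [x| |] //= _; rewrite -EFinD lee_fin. Qed.

End FineBounds.

Lemma le_limit_at0 {R : realType} (A B k : R) : 0 <= k ->
  (forall t, 0 < t -> t < 1 -> A + k * (1 - t) <= B) -> A + k <= B.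
Proof.
move=> k_ge0 H; apply/ler_addgt0Pr => e e_gt0.
set t := e / (k + e + 1).
have den_gt0 : 0 < k + e + 1 by lra.
have t_gt0 : 0 < t by rewrite divr_gt0.
have t_lt1 : t < 1 by rewrite /t ltr_pdivrMr // mul1r; lra.
have kt_le : k * t <= e by rewrite /t mulrA ler_pdivrMr //; nra.
have := H t t_gt0 t_lt1; lra.
Qed.

Section ThreePoint.
Context {R : realType} {d : nat} {rho : R} {g : 'rV[R]_d -> \bar R}.
Hypotheses (g_wc : weakly_convex rho g) (g_nm : no_minus_infty g).

Lemma weakly_convex_segment (y m : 'rV[R]_d) (t : R) :
  g y \is a fin_num -> g m \is a fin_num -> 0 <= t -> t <= 1 ->
  g (t *: y + (1 - t) *: m) \is a fin_num /\
  fine (g (t *: y + (1 - t) *: m)) + rho / 2 * enorm (t *: y + (1 - t) *: m) ^+ 2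
    <= t * (fine (g y) + rho / 2 * enorm y ^+ 2) +
       (1 - t) * (fine (g m) + rho / 2 * enorm m ^+ 2).
Proof.
move=> gy gm t0 t1; apply: fine_addr_le => //.
by have := g_wc y m t t0 t1; rewrite -(fineK gy) -(fineK gm) -!EFinD.
Qed.

Lemma three_point {c : R} {z m : 'rV[R]_d} (y : 'rV[R]_d) :
  rho / 2 <= c ->
  is_argmin (fun v => (g v + (c * enorm (v - z) ^+ 2)%:E)%E) m ->
  g y \is a fin_num ->
  g m \is a fin_num /\
  fine (g m) + c * enorm (m - z) ^+ 2 + (c - rho / 2) * enorm (y - m) ^+ 2
    <= fine (g y) + c * enorm (y - z) ^+ 2.
Proof.
move=> c_ge m_min gy.
have [gm _] : g m \is a fin_num /\ fine (g m) + c * enorm (m - z) ^+ 2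
    <= fine (g y) + c * enorm (y - z) ^+ 2.
  by apply: fine_addr_le => //; rewrite EFinD fineK //; exact: m_min.
split=> //; apply: le_limit_at0.
  by apply: mulr_ge0; [rewrite subr_ge0 | exact: sqr_ge0].
move=> t t0 t1; set w := t *: y + (1 - t) *: m.
have [gw seg] := weakly_convex_segment y m t gy gm (ltW t0) (ltW t1).
have min_w : fine (g m) + c * enorm (m - z) ^+ 2 <= fine (g w) + c * enorm (w - z) ^+ 2.
  by have := m_min w; rewrite -(fineK gw) -(fineK gm) -!EFinD lee_fin.
have wz : w - z = t *: (y - z) + (1 - t) *: (m - z).
  by apply/matrixP => i j; rewrite !mxE; ring.
have ym : (y - z) - (m - z) = y - m by apply/matrixP => i j; rewrite !mxE; ring.
move: seg min_w; rewrite wz !enorm_comb ym => seg min_w.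
have : t * (fine (g m) + c * enorm (m - z) ^+ 2
           + (c - rho / 2) * enorm (y - m) ^+ 2 * (1 - t)
           - (fine (g y) + c * enorm (y - z) ^+ 2)) <= 0.
  by move: seg min_w; set Gw := fine (g w); set D := enorm (y - m) ^+ 2; nra.
by rewrite pmulr_rle0 // subr_le0.
Qed.

End ThreePoint.

Definition rate {R : realType} (rho q mu theta : R) : R :=
  (q + theta) / (mu^-1 - rho + theta).

Lemma rate_gt0 {R : realType} (rho q mu theta : R) :
  0 <= q -> q < theta -> rho + q < mu^-1 -> 0 < rate rho q mu theta.
Proof. by move=> *; apply: divr_gt0; lra. Qed.

Lemma rate_lt1 {R : realType} (rho q mu theta : R) :
  0 <= q -> q < theta -> rho + q < mu^-1 -> rate rho q mu theta < 1.
Proof. by move=> *; rewrite /rate ltr_pdivrMr ?mul1r; lra. Qed.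

Section ContractionStep.
Context {R : realType} {d : nat} {rho q mu theta : R}.
Context {f : 'rV[R]_d -> \bar R} {fm : 'rV[R]_d -> 'rV[R]_d -> \bar R}.
Context {x0 p : 'rV[R]_d}.

Lemma contraction_step {xk xk1 : 'rV[R]_d} :
  no_minus_infty f -> weakly_convex rho f -> two_sided_model rho q f fm ->
  0 < mu -> rho + q < mu^-1 -> 0 <= q -> q < theta ->
  is_prox mu f x0 p -> f p \is a fin_num ->
  is_argmin (fun y => (fm xk y + ((1 + theta * mu) / (2 * mu) *
      enorm (y - (1 + theta * mu)^-1 *: (x0 + (theta * mu) *: xk)) ^+ 2)%:E)%E) xk1 ->
  enorm (xk1 - p) ^+ 2 <= rate rho q mu theta * enorm (xk - p) ^+ 2.
Proof.
move=> f_nm f_wc model mu_gt0 mu_small q_ge0 theta_gt p_prox fp xk1_min.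
have [_ fm_nm fm_wc fm_sandwich] := model xk.
have inv_mu : 1 / (2 * mu) = mu^-1 / 2 by field; rewrite gt_eqF.
have big_c : (1 + theta * mu) / (2 * mu) = mu^-1 / 2 + theta / 2.
  by field; rewrite gt_eqF.
have big_c_ge : rho / 2 <= (1 + theta * mu) / (2 * mu) by rewrite big_c; lra.
have inv_mu_ge : rho / 2 <= 1 / (2 * mu) by rewrite inv_mu; lra.
have [fmp model_p] : fm xk p \is a fin_num /\
    fine (fm xk p) <= fine (f p) + q / 2 * enorm (p - xk) ^+ 2.
  by apply: fine_le => //; rewrite EFinD fineK //; case: (fm_sandwich p).
have [fmx step_model] := three_point fm_wc fm_nm p big_c_ge xk1_min fmp.
have [fx model_x] : f xk1 \is a fin_num /\
    fine (f xk1) <= fine (fm xk xk1) + q / 2 * enorm (xk1 - xk) ^+ 2.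
  by apply: fine_le => //; rewrite EFinD fineK //; case: (fm_sandwich xk1).
have [_ step_prox] := three_point f_wc f_nm xk1 inv_mu_ge p_prox fx.
have shift := recentred_quadratic mu theta x0 xk xk1 p mu_gt0 ltac:(lra).
move: step_model step_prox shift model_p model_x.
rewrite big_c inv_mu (enormB_sym p xk1) (enormB_sym p xk).
set D := enorm (xk1 - p) ^+ 2; set P := enorm (xk - p) ^+ 2.
set B := enorm (xk1 - xk) ^+ 2.
have D_ge0 : 0 <= (mu^-1 - rho) * D by apply: mulr_ge0; [lra | exact: sqr_ge0].
have B_ge0 : 0 <= (theta - q) * B by apply: mulr_ge0; [lra | exact: sqr_ge0].
move=> step_model step_prox shift model_p model_x.
(* summing the four inequalities, the function values and the x0-terms cancel:
   (mu^-1 - rho + theta/2) D + (theta - q)/2 B <= (q + theta)/2 P *)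
rewrite /rate mulrAC ler_pdivlMr; last by lra.
by rewrite mulrC; lra.
Qed.

End ContractionStep.

Lemma geometric_decay {R : realType} {u : nat -> R} {r : R} :
  0 <= r -> (forall k, u k.+1 <= r * u k) -> forall k, u k <= r ^+ k * u 0%N.
Proof.
move=> r_ge0 step; elim=> [|k IH]; first by rewrite expr0 mul1r.
by rewrite exprSr -mulrA mulrCA; apply: le_trans (step k) (ler_wpM2l r_ge0 IH).
Qed.

Lemma iteration_count {R : realType} {a r : R} {K : nat} :
  0 < a -> 0 < r -> r < 1 -> 2 * ln a^-1 / ln r^-1 <= K%:R -> r ^+ K <= a ^+ 2.
Proof.
move=> a_gt0 r_gt0 r_lt1.
have ln_r : ln r < 0 by apply: ln_lt0; rewrite r_gt0.
rewrite !lnV ?posrE // ler_pdivrMr; last by lra.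
move=> K_ge.
have rK : r ^+ K \in Num.pos by rewrite posrE exprn_gt0.
have a2 : a ^+ 2 \in Num.pos by rewrite posrE exprn_gt0.
rewrite -(ler_ln rK a2) !lnXn // -[ln r *+ K]mulr_natr -[ln a *+ 2]mulr_natr.
lra.
Qed.

Lemma prox_fin_num {R : realType} {d : nat} {mu : R} {f : 'rV[R]_d -> \bar R}
    {x p : 'rV[R]_d} :
  no_minus_infty f -> proper_fun f -> is_prox mu f x p -> f p \is a fin_num.
Proof.
move=> f_nm [y fy] p_prox.
have y_fin : f y \is a fin_num by rewrite fin_numE f_nm lt_eqF.
by have := p_prox y; rewrite -(fineK y_fin) -EFinD => /(fine_addr_le (f_nm p)) [].
Qed.

Theorem mainTheorem9 (R : realType) (d : nat) (rho q : R)
  (f : 'rV[R]_d -> \bar R) (fm : 'rV[R]_d -> 'rV[R]_d -> \bar R)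
  (a mu theta : R) (x : nat -> 'rV[R]_d) (p : 'rV[R]_d) (K : nat) :
  0 <= rho -> 0 <= q ->
  closed_fun f -> no_minus_infty f -> proper_fun f -> weakly_convex rho f ->
  two_sided_model rho q f fm ->
  0 < a -> a < 1 -> 0 < mu -> rho + q < mu^-1 -> q < theta ->
  (forall k, is_argmin (fun y => (fm (x k) y +
      ((1 + theta * mu) / (2 * mu) *
        enorm (y - (1 + theta * mu)^-1 *: (x 0%N + (theta * mu) *: x k))%R ^+ 2)%:E)%E)
      (x k.+1)) ->
  is_prox mu f (x 0%N) p ->
  2 * ln a^-1 / ln ((mu^-1 - rho + theta) / (q + theta)) <= K%:R ->
  enorm (x K - p) <= a * enorm (x 0%N - p).
Proof.
move=> _ q_ge0 _ f_nm f_proper f_wc model a_gt0 a_lt1 mu_gt0 mu_small theta_gt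
  x_step p_prox K_ge.
have fp := prox_fin_num f_nm f_proper p_prox.
set r := rate rho q mu theta.
have r_gt0 : 0 < r by exact: rate_gt0.
have step k : enorm (x k.+1 - p) ^+ 2 <= r * enorm (x k - p) ^+ 2.
  exact: contraction_step f_nm f_wc model mu_gt0 mu_small q_ge0 theta_gt
    p_prox fp (x_step k).
have decay := @geometric_decay _ (fun k => enorm (x k - p) ^+ 2) r (ltW r_gt0) step K.
have rK : r ^+ K <= a ^+ 2.
  apply: iteration_count => //; first exact: rate_lt1.
  by rewrite /r /rate invf_div.
have dist_ge0 : 0 <= enorm (x K - p) by exact: enorm_ge0.
have bound_ge0 : 0 <= a * enorm (x 0%N - p) by rewrite mulr_ge0 ?enorm_ge0 ?ltW.
rewrite -(ler_sqr (dist_ge0 : _ \in Num.nneg) (bound_ge0 : _ \in Num.nneg)) exprMn.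
by apply: le_trans decay _; apply: ler_wpM2r => //; exact: sqr_ge0.
Qed.
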